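(* Let $0<s\le1$ and $n\in\mathbb{N}$. Then for every $t\in\mathbb{R}$ the operator $B_{30}^{(n)}$ defined in the context satisfies, for all $v\in\dot H^s$, $$\|B_{30}^{(n)}(v,v,v)\|_{\dot H^s}\le\frac{\pi^2}{n^s}\|v\|_{\dot H^0}^2\|v\|_{\dot H^s}.$$
   Context: Write $\mathbb{Z}_0=\mathbb{Z}\setminus\{0\}$. For $s\in\mathbb{R}$, $\dot H^s$ denotes the Hilbert space of complex sequences $v=(v_k)_{k\in\mathbb{Z}_0}$ with $\|v\|_{\dot H^s}^2=\sum_{k\in\mathbb{Z}_0}|k|^{2s}|v_k|^2<\infty$. For $n\in\mathbb{N}$, $\Pi_{-n}$ is the projection $(\Pi_{-n}v)_k=0$ if $|k|\le n$ and $(\Pi_{-n}v)_k=v_k$ if $|k|>n$. For $t\in\mathbb{R}$, $$B_{30}^{(n)}(u,v,w)_k=\sum^{\mathrm{nonres}}_{k_1+k_2+k_3=k}\frac{e^{3i(k_1+k_2)(k_2+k_3)(k_3+k_1)t}}{k_1(k_1+k_2)(k_2+k_3)(k_3+k_1)}u_{k_1}(\Pi_{-n}v)_{k_2}(\Pi_{-n}w)_{k_3},\qquad k\in\mathbb{Z}_0,$$ where the sum runs over $k_1,k_2,k_3\in\mathbb{Z}_0$ with $k_1+k_2+k_3=k$ and $(k_1+k_2)(k_2+k_3)(k_3+k_1)\ne0$. *)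

From Stdlib Require Import Reals Lra ZArith List ClassicalEpsilon Bool.
From Coquelicot Require Import Coquelicot.
Import ListNotations.
Open Scope R_scope.

(* Sequences indexed by Z_0 = Z \ {0}: represented as Z -> C, value at 0 ignored. *)
Definition seqC := Z -> C.

Definition lsum {I : Type} (f : I -> C) (A : list I) : C :=
  fold_right Cplus (RtoC 0) (map f A).

Definition lsumR {I : Type} (f : I -> R) (A : list I) : R :=
  fold_right Rplus 0 (map f A).

(* ||v||_{Hdot^s}^2 in [0, +oo] : supremum of finite partial sums over
   duplicate-free finite subsets of Z_0. *)
Definition hsnorm2 (s : R) (v : seqC) : Rbar :=
  Lub_Rbar (fun x => exists A : list Z, NoDup A /\ (forall k, In k A -> k <> 0%Z) /\
     x = lsumR (fun k => Rpower (IZR (Z.abs k)) (2 * s) * (Cmod (v k))^2) A).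

Definition in_Hdot (s : R) (v : seqC) : Prop := is_finite (hsnorm2 s v).

(* the Hdot^s norm (meaningful when in_Hdot s v) *)
Definition hnorm (s : R) (v : seqC) : R := sqrt (real (hsnorm2 s v)).

Definition Pi_neg (n : nat) (v : seqC) : seqC :=
  fun k => if (Z.abs k <=? Z.of_nat n)%Z then RtoC 0 else v k.

Definition cexpi (theta : R) : C := (cos theta, sin theta).

(* Unconditional (net over finite subsets) summability of a family over Z*Z. *)
Definition HasSum2 (f : Z * Z -> C) (S : C) : Prop :=
  forall eps : R, 0 < eps -> exists A0 : list (Z * Z),
    forall A : list (Z * Z), NoDup A -> incl A0 A -> Cmod (Cminus (lsum f A) S) < eps.

(* The sum, chosen classically (unique when it exists). *)
Definition Sum2 (f : Z * Z -> C) : C :=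
  epsilon (inhabits (RtoC 0)) (fun S => HasSum2 f S).

(* Summand of B_30^{(n)}(u,v,w)_k indexed by (k1,k2), with k3 = k - k1 - k2;
   zero outside the admissible (nonresonant, k_i in Z_0) index set. *)
Definition B30_term (n : nat) (t : R) (u v w : seqC) (k : Z) (p : Z * Z) : C :=
  let k1 := fst p in let k2 := snd p in let k3 := (k - k1 - k2)%Z in
  if (orb (orb (orb (k1 =? 0) (k2 =? 0)) (k3 =? 0))
       ((k1 + k2) * (k2 + k3) * (k3 + k1) =? 0))%Z
  then RtoC 0
  else
    Cmult (Cmult (Cmult
      (Cdiv (cexpi (3 * IZR ((k1 + k2) * (k2 + k3) * (k3 + k1)) * t))
            (RtoC (IZR (k1 * (k1 + k2) * (k2 + k3) * (k3 + k1)))))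
      (u k1)) (Pi_neg n v k2)) (Pi_neg n w k3).

Definition B30 (n : nat) (t : R) (u v w : seqC) : seqC :=
  fun k => Sum2 (B30_term n t u v w k).

From Stdlib Require Import Reals Lra Lia ZArith List Permutation FinFun Bool Classical ClassicalEpsilon.
From Coquelicot Require Import Coquelicot.
Import ListNotations.
Open Scope R_scope.

(* Each summand of B30(v,v,v)_k is at most K(k,p) |v_k1| |v_k2| |v_k3|, where
   K = 1 / |k1 (k1+k2) (k2+k3) (k3+k1)| restricted to |k2|, |k3| > n, and the weight
   |k|^s <= |k1|^s + |k2|^s + |k3|^s (0 < s <= 1) is distributed onto the three factors.
   The estimate then closes by a Schur test.  For fixed k, sum_p K(k,p)^2 <= M_n: since
   (k2+k3)^2 + 2(k1+k2)^2 + 2(k1+k3)^2 >= 4(n+1)^2, each of three terms drops one factor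
   of the denominator, leaving products of sums of 1/x^2 and 1/x^4, so M_n = O(1/n^2).
   On the other hand the squared trilinear factors sum to at most 9 |v|_s^2 |v|_0^4 over
   all (k, k1, k2).  Cauchy-Schwarz gives |B30|_s^2 <= 9 M_n |v|_s^2 |v|_0^4, and
   9 M_n <= pi^4 / n^(2s) numerically.  As B30_k is an unconditional sum, everything is
   carried out on finite partial sums, with an epsilon of slack. *)

Lemma Rinv_ge0 x : 0 <= x -> 0 <= / x.
Proof.
  intros [Hx| <-]; [apply Rlt_le, Rinv_0_lt_compat, Hx | rewrite Rinv_0; lra].
Qed.

Lemma le_of_le_plus_mul x y c : 0 <= c -> (forall eps, 0 < eps -> x <= y + eps * c) -> x <= y.
Proof.
  intros Hc H; apply Rle_plus_epsilon; intros eps Heps.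
  specialize (H (eps / (c + 1)) ltac:(apply Rdiv_lt_0_compat; lra)).
  assert (eps / (c + 1) * c <= eps).
  { apply (Rmult_le_reg_r (c + 1)); [lra|].
    replace (eps / (c + 1) * c * (c + 1)) with (eps * c) by (field; lra); nra. }
  lra.
Qed.

Lemma Rmult_le_amgm x y m : 0 < m -> x * y <= x ^ 2 / (2 * m) + m * y ^ 2 / 2.
Proof.
  intros Hm.
  assert (Hsq : 0 <= (x - m * y) ^ 2 / (2 * m))
    by (apply Rmult_le_pos; [apply pow2_ge_0 | apply Rinv_ge0; lra]).
  replace ((x - m * y) ^ 2 / (2 * m)) with (x ^ 2 / (2 * m) + m * y ^ 2 / 2 - x * y) in Hsq
    by (field; lra).
  lra.
Qed.

Lemma Rpower_sq x s : Rpower x s ^ 2 = Rpower x (2 * s).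
Proof. cbn; rewrite Rmult_1_r, <- Rpower_plus; f_equal; ring. Qed.

Lemma Rpower_ge_self x s : 0 < x <= 1 -> 0 < s <= 1 -> x <= Rpower x s.
Proof.
  intros Hx Hs; rewrite <- (Rpower_1 x) at 1 by lra; unfold Rpower.
  assert (ln x <= 0) by (rewrite <- ln_1; apply ln_le; lra).
  assert (Hle : 1 * ln x <= s * ln x) by nra.
  destruct (Rle_lt_or_eq_dec _ _ Hle) as [Hlt|Heq];
    [apply Rlt_le, exp_increasing, Hlt | rewrite Heq; lra].
Qed.

(* Concavity: the normalised parts a/(a+b), b/(a+b) of 1 only grow under [Rpower _ s]. *)
Lemma Rpower_plus_le a b s : 0 < a -> 0 < b -> 0 < s <= 1 ->
  Rpower (a + b) s <= Rpower a s + Rpower b s.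
Proof.
  intros Ha Hb Hs.
  assert (Hsplit : forall c, 0 < c <= a + b ->
            Rpower c s = Rpower (a + b) s * Rpower (c / (a + b)) s /\
            c / (a + b) <= Rpower (c / (a + b)) s).
  { intros c Hc; split.
    - rewrite Rpower_mult_distr by (try apply Rdiv_lt_0_compat; lra); f_equal; field; lra.
    - apply Rpower_ge_self; [|lra]; split; [apply Rdiv_lt_0_compat; lra|].
      apply (Rmult_le_reg_r (a + b)); [lra|]; unfold Rdiv; rewrite Rmult_assoc, Rinv_l; lra. }
  destruct (Hsplit a ltac:(lra)) as [-> Ha']; destruct (Hsplit b ltac:(lra)) as [-> Hb'].
  assert (Hsum : a / (a + b) + b / (a + b) = 1) by (field; lra).
  pose proof (exp_pos (s * ln (a + b))); unfold Rpower in *; nra.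
Qed.

Lemma Cmod_le_abs_sum (x y : R) : Cmod (x, y) <= Rabs x + Rabs y.
Proof.
  unfold Cmod; cbn [fst snd].
  pose proof (Rabs_pos x); pose proof (Rabs_pos y).
  rewrite <- (sqrt_pow2 (Rabs x + Rabs y)) by lra.
  apply sqrt_le_1_alt; rewrite <- (pow2_abs x), <- (pow2_abs y); nra.
Qed.

Lemma Cmod_cexpi th : Cmod (cexpi th) = 1.
Proof.
  unfold Cmod, cexpi; cbn [fst snd].
  replace (cos th ^ 2 + sin th ^ 2) with 1 by (rewrite <- (sin2_cos2 th); unfold Rsqr; ring).
  apply sqrt_1.
Qed.

Section FiniteSums.
Context {I : Type}.
Implicit Types (f g : I -> R) (L : list I).

Lemma lsumR_cons f x L : lsumR f (x :: L) = f x + lsumR f L.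
Proof. reflexivity. Qed.

Lemma lsumR_app f L1 L2 : lsumR f (L1 ++ L2) = lsumR f L1 + lsumR f L2.
Proof.
  induction L1 as [|x L1 IH]; [cbn [app]; unfold lsumR at 2; cbn; ring|].
  rewrite <- app_comm_cons, !lsumR_cons, IH; ring.
Qed.

Lemma lsumR_plus f g L : lsumR (fun x => f x + g x) L = lsumR f L + lsumR g L.
Proof. induction L as [|x L IH]; [unfold lsumR; cbn; ring|]. rewrite !lsumR_cons, IH; ring. Qed.

Lemma lsumR_scal c f L : lsumR (fun x => c * f x) L = c * lsumR f L.
Proof. induction L as [|x L IH]; [unfold lsumR; cbn; ring|]. rewrite !lsumR_cons, IH; ring. Qed.

Lemma lsumR_opp f L : lsumR (fun x => - f x) L = - lsumR f L.
Proof. induction L as [|x L IH]; [unfold lsumR; cbn; ring|]. rewrite !lsumR_cons, IH; ring. Qed.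

Lemma lsumR_le f g L : (forall x, In x L -> f x <= g x) -> lsumR f L <= lsumR g L.
Proof.
  induction L as [|x L IH]; intros H; [cbn; lra|]. rewrite !lsumR_cons.
  apply Rplus_le_compat; [apply H; left; auto | apply IH; intros; apply H; right; auto].
Qed.

Lemma lsumR_ext f g L : (forall x, In x L -> f x = g x) -> lsumR f L = lsumR g L.
Proof. intros H; apply Rle_antisym; apply lsumR_le; intros x Hx; rewrite H; auto; lra. Qed.

Lemma lsumR_ge0 f L : (forall x, In x L -> 0 <= f x) -> 0 <= lsumR f L.
Proof.
  intros H; replace 0 with (lsumR (fun _ => 0) L); [now apply lsumR_le|].
  induction L; [reflexivity|]. rewrite lsumR_cons, IHL; [ring|auto with datatypes].
Qed.

Lemma lsumR_perm f L L' : Permutation L L' -> lsumR f L = lsumR f L'.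
Proof. induction 1; rewrite ?lsumR_cons in *; lra. Qed.

Lemma lsumR_incl f L1 L2 : NoDup L1 -> NoDup L2 -> incl L1 L2 ->
  (forall x, 0 <= f x) -> lsumR f L1 <= lsumR f L2.
Proof.
  revert L2; induction L1 as [|x L1 IH]; intros L2 N1 N2 Hi Hf.
  - apply lsumR_ge0; auto.
  - destruct (in_split x L2) as [l1 [l2 ->]]; [apply Hi; left; auto|].
    rewrite (lsumR_perm f (l1 ++ x :: l2) (x :: l1 ++ l2)) by (symmetry; apply Permutation_middle).
    rewrite !lsumR_cons; inversion N1; subst.
    apply Rplus_le_compat_l, IH; auto.
    + now apply NoDup_remove_1 in N2.
    + intros y Hy.
      assert (Hy' : In y (l1 ++ x :: l2)) by (apply Hi; right; auto).
      destruct (in_app_or _ _ _ Hy') as [|[<-|]]; auto with datatypes; contradiction.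
Qed.

Lemma lsumR_filter_zero (P : I -> bool) f L :
  (forall x, P x = false -> f x = 0) -> lsumR f L = lsumR f (filter P L).
Proof.
  intros H; induction L as [|x L IH]; [reflexivity|]; cbn [filter].
  destruct (P x) eqn:E; rewrite ?lsumR_cons, <- IH; [|rewrite (H x E)]; ring.
Qed.

Lemma lsumR_split (P : I -> bool) (f : I -> R) L :
  lsumR f L = lsumR f (filter P L) + lsumR f (filter (fun x => negb (P x)) L).
Proof.
  induction L as [|x L IH]; [unfold lsumR; cbn; ring|]; cbn [filter].
  destruct (P x); cbn [negb]; rewrite ?lsumR_cons, IH; ring.
Qed.

End FiniteSums.

Lemma lsumR_map {I J : Type} (f : J -> R) (h : I -> J) L :
  lsumR f (map h L) = lsumR (fun x => f (h x)) L.
Proof. unfold lsumR; now rewrite map_map. Qed.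

Definition sum_bounded {I : Type} (g : I -> R) (B : R) : Prop :=
  forall L, NoDup L -> lsumR g L <= B.

Section SumBounded.
Context {I : Type}.
Implicit Types (f g : I -> R).

Lemma sum_bounded_ge0 g B : sum_bounded g B -> 0 <= B.
Proof. intros H; exact (H [] (NoDup_nil _)). Qed.

Lemma sum_bounded_le f g B : (forall x, f x <= g x) -> sum_bounded g B -> sum_bounded f B.
Proof. intros Hfg H L NL; eapply Rle_trans; [apply lsumR_le; auto | apply H, NL]. Qed.

Lemma sum_bounded_plus f g A B :
  sum_bounded f A -> sum_bounded g B -> sum_bounded (fun x => f x + g x) (A + B).
Proof. intros Hf Hg L NL; rewrite lsumR_plus; specialize (Hf L NL); specialize (Hg L NL); lra. Qed.

Lemma sum_bounded_scal c g B : 0 <= c -> sum_bounded g B -> sum_bounded (fun x => c * g x) (c * B).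
Proof. intros Hc H L NL; rewrite lsumR_scal; apply Rmult_le_compat_l; auto. Qed.

Lemma sum_bounded_comp {J : Type} (g : J -> R) (h : I -> J) B :
  Injective h -> sum_bounded g B -> sum_bounded (fun x => g (h x)) B.
Proof. intros Hh H L NL; rewrite <- lsumR_map; apply H, Injective_map_NoDup; auto. Qed.

End SumBounded.

Section Pairs.
Context {A B : Type} (eqA : forall x y : A, {x = y} + {x <> y}).

Lemma lsumR_fiber_le (ga : A * B -> R) x Bd F :
  NoDup F -> (forall p, In p F -> fst p = x) ->
  sum_bounded (fun y => ga (x, y)) Bd -> lsumR ga F <= Bd.
Proof.
  intros NF HF HB.
  replace (lsumR ga F) with (lsumR (fun y => ga (x, y)) (map snd F)).
  - apply HB. induction NF as [|p F Hp NF IH]; constructor.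
    + intros Hin; apply in_map_iff in Hin as [q [Eq Hq]]; apply Hp.
      replace p with q; [exact Hq|].
      rewrite (surjective_pairing p), (surjective_pairing q), Eq.
      now rewrite (HF p (or_introl eq_refl)), (HF q (or_intror Hq)).
    + apply IH; intros; apply HF; right; auto.
  - rewrite lsumR_map; apply lsumR_ext; intros [a b] Hp; cbn.
    now rewrite <- (HF (a, b) Hp).
Qed.

Lemma lsumR_pairs_le (G : A * B -> R) (al : A -> R) (ga : A * B -> R) Bd :
  (forall x, 0 <= al x) -> (forall p, 0 <= ga p) ->
  (forall x, sum_bounded (fun y => ga (x, y)) Bd) ->
  forall U F, NoDup U -> NoDup F -> (forall p, In p F -> In (fst p) U) ->
  (forall p, In p F -> G p <= al (fst p) * ga p) ->
  lsumR G F <= Bd * lsumR al U.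
Proof.
  intros Hal Hga HB U; induction U as [|x U IH]; intros F NU NF HF HG.
  - destruct F as [|p F]; [cbn; lra|]. destruct (HF p (or_introl eq_refl)).
  - inversion NU as [|? ? HxU NU']; subst.
    set (P := fun p : A * B => if eqA (fst p) x then true else false).
    rewrite (lsumR_split P), lsumR_cons, Rmult_plus_distr_l.
    apply Rplus_le_compat.
    + assert (HPx : forall p, In p (filter P F) -> fst p = x /\ In p F).
      { intros p Hp; apply filter_In in Hp as [Hp HPp].
        unfold P in HPp; destruct (eqA (fst p) x); [auto|discriminate]. }
      apply Rle_trans with (lsumR (fun p => al x * ga p) (filter P F)).
      { apply lsumR_le; intros p Hp; destruct (HPx p Hp) as [<- Hp']; auto. }
      rewrite lsumR_scal, (Rmult_comm Bd); apply Rmult_le_compat_l; [apply Hal|].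
      apply (lsumR_fiber_le ga x); [apply NoDup_filter; auto | intros; apply HPx; auto | apply HB].
    + apply IH; auto.
      * apply NoDup_filter, NF.
      * intros p Hp; apply filter_In in Hp as [Hp HPp].
        destruct (HF p Hp) as [E|]; auto.
        unfold P in HPp; destruct (eqA (fst p) x); [discriminate|congruence].
      * intros p Hp; apply filter_In in Hp; apply HG; tauto.
Qed.

Lemma sum_bounded_pairs (al : A -> R) (ga : A * B -> R) Ba Bd :
  0 <= Bd -> (forall x, 0 <= al x) -> (forall p, 0 <= ga p) ->
  sum_bounded al Ba -> (forall x, sum_bounded (fun y => ga (x, y)) Bd) ->
  sum_bounded (fun p => al (fst p) * ga p) (Bd * Ba).
Proof.
  intros HBd Hal Hga Ha HB F NF.
  eapply Rle_trans.
  - apply (lsumR_pairs_le _ al ga Bd Hal Hga HB (nodup eqA (map fst F))); auto.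
    + apply NoDup_nodup.
    + intros p Hp; apply nodup_In, in_map, Hp.
    + intros; lra.
  - apply Rmult_le_compat_l; [exact HBd | apply Ha, NoDup_nodup].
Qed.
End Pairs.

Lemma sum_bounded_trilinear (a b c : Z -> R) Ba Bb Bc :
  (forall x, 0 <= a x) -> (forall x, 0 <= b x) -> (forall x, 0 <= c x) ->
  sum_bounded a Ba -> sum_bounded b Bb -> sum_bounded c Bc ->
  sum_bounded (fun q : Z * (Z * Z) =>
    a (fst (snd q)) * b (snd (snd q)) * c (fst q - fst (snd q) - snd (snd q))%Z) (Ba * Bb * Bc).
Proof.
  intros Ha Hb Hc HBa HBb HBc.
  pose proof (sum_bounded_ge0 _ _ HBb). pose proof (sum_bounded_ge0 _ _ HBc).
  assert (Hbc : sum_bounded (fun y : Z * Z => b (fst y) * c (snd y)) (Bc * Bb)).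
  { apply (sum_bounded_pairs Z.eq_dec b (fun y => c (snd y))); auto. }
  assert (Habc : sum_bounded (fun r : Z * (Z * Z) => a (fst r) * (b (fst (snd r)) * c (snd (snd r))))
                   (Bc * Bb * Ba)).
  { apply (sum_bounded_pairs Z.eq_dec a (fun r => b (fst (snd r)) * c (snd (snd r)))); auto.
    - apply Rmult_le_pos; auto.
    - intros; apply Rmult_le_pos; auto. }
  replace (Ba * Bb * Bc) with (Bc * Bb * Ba) by ring.
  set (phi := fun q : Z * (Z * Z) =>
                (fst (snd q), (snd (snd q), (fst q - fst (snd q) - snd (snd q))%Z))).
  apply (sum_bounded_le _ (fun q => a (fst (phi q)) * (b (fst (snd (phi q))) * c (snd (snd (phi q)))))).
  - intros q; cbn; lra.
  - apply (sum_bounded_comp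
             (fun r : Z * (Z * Z) => a (fst r) * (b (fst (snd r)) * c (snd (snd r)))) phi);
      [|exact Habc].
    intros [k [k1 k2]] [k' [k1' k2']] E; cbn in E; injection E; intros.
    repeat f_equal; lia.
Qed.

(** * Sums of inverse powers *)

(* [/ 0 = 0] in Stdlib, so [inv_sq 0 = 0]. *)
Definition inv_sq (x : Z) : R := / IZR x ^ 2.

Lemma inv_sq_ge0 x : 0 <= inv_sq x.
Proof. apply Rinv_ge0, pow2_ge_0. Qed.

Lemma inv_sq_opp x : inv_sq (- x) = inv_sq x.
Proof. unfold inv_sq; rewrite opp_IZR; f_equal; ring. Qed.

Lemma inv_sq_succ k : inv_sq (Z.of_nat (S k)) = / (INR k + 1) ^ 2.
Proof. unfold inv_sq; now rewrite <- INR_IZR_INZ, S_INR. Qed.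

Lemma sum_bounded_even (g : Z -> R) B :
  (forall x, 0 <= g x) -> g 0%Z = 0 -> (forall x, g (- x)%Z = g x) ->
  (forall M, lsumR (fun k => g (Z.of_nat k)) (seq 1 M) <= B) -> sum_bounded g (2 * B).
Proof.
  intros Hg H0 Hopp HB L NL.
  set (M := fold_right (fun x acc => Nat.max (Z.abs_nat x) acc) 0%nat L).
  assert (HM : forall x, In x L -> (Z.abs_nat x <= M)%nat).
  { unfold M; clear; induction L as [|y L IH]; intros x Hx; [destruct Hx|].
    destruct Hx as [<-|Hx]; cbn; [lia|]. specialize (IH x Hx); lia. }
  set (pos := map Z.of_nat (seq 1 M)).
  set (neg := map (fun k => (- Z.of_nat k)%Z) (seq 1 M)).
  rewrite (lsumR_filter_zero (fun x => negb (x =? 0)%Z));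
    [|intros x Hx; destruct (x =? 0)%Z eqn:E; [now apply Z.eqb_eq in E as ->|discriminate]].
  apply Rle_trans with (lsumR g (pos ++ neg)).
  - apply lsumR_incl; auto.
    + apply NoDup_filter, NL.
    + apply NoDup_app.
      * apply Injective_map_NoDup; [intros ? ? ?; lia | apply seq_NoDup].
      * apply Injective_map_NoDup; [intros ? ? ?; lia | apply seq_NoDup].
      * intros x Hp Hn; apply in_map_iff in Hp as [i [<- Hi]]; apply in_map_iff in Hn as [j [E Hj]].
        apply in_seq in Hi, Hj; lia.
    + intros x Hx; apply filter_In in Hx as [Hx Hx0]; specialize (HM x Hx).
      apply Bool.negb_true_iff, Z.eqb_neq in Hx0; apply in_or_app.
      destruct (Z_le_dec 0 x).
      * left; apply in_map_iff; exists (Z.to_nat x); split; [lia|apply in_seq; lia].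
      * right; apply in_map_iff; exists (Z.to_nat (- x)); split; [lia|apply in_seq; lia].
  - unfold pos, neg; rewrite lsumR_app, !lsumR_map.
    rewrite (lsumR_ext (fun k => g (- Z.of_nat k)%Z) (fun k => g (Z.of_nat k))) by (intros; apply Hopp).
    specialize (HB M); lra.
Qed.

Lemma lsumR_seq_telescope (f phi : nat -> R) m :
  (forall k, (m <= k)%nat -> f (S k) + phi (S k) <= phi k) ->
  forall M, lsumR f (seq 1 (M + m)) + phi (M + m)%nat <= lsumR f (seq 1 m) + phi m.
Proof.
  intros Hstep M; induction M as [|M IH]; [cbn [Nat.add]; lra|].
  replace (S M + m)%nat with (S (M + m)) by lia.
  rewrite seq_S, lsumR_app; cbn [lsumR map fold_right].
  replace (1 + (M + m))%nat with (S (M + m)) by lia.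
  specialize (Hstep (M + m)%nat ltac:(lia)); lra.
Qed.

Lemma lsumR_seq_le_telescope (f phi : nat -> R) m :
  (forall k, 0 <= f k) -> (forall k, 0 <= phi k) ->
  (forall k, (m <= k)%nat -> f (S k) + phi (S k) <= phi k) ->
  forall M, lsumR f (seq 1 M) <= lsumR f (seq 1 m) + phi m.
Proof.
  intros Hf Hphi Hstep M.
  pose proof (lsumR_seq_telescope f phi m Hstep M) as T.
  rewrite (seq_app M m 1), lsumR_app in T.
  pose proof (lsumR_ge0 f (seq (1 + M) m) (fun k _ => Hf k)); pose proof (Hphi (M + m)%nat); lra.
Qed.

(* Explicit upper bounds for 2 Σ_{k≥1} k^-2 and 2 Σ_{k≥1} k^-4: the first four
   (resp. two) terms plus a tail that telescopes against 1/(k+1/2)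
   (resp. 1/(9(k+1/2))). *)
Definition sum_inv_sq_ub : R := 2 * (1 + /4 + /9 + /16 + 2/9).
Definition sum_inv_4th_ub : R := 2 * (1 + /16 + 2/45).

Lemma sum_bounded_inv_sq : sum_bounded inv_sq sum_inv_sq_ub.
Proof.
  apply sum_bounded_even; [apply inv_sq_ge0 | unfold inv_sq; cbn; rewrite Rmult_0_l, Rinv_0; lra
                          | apply inv_sq_opp |].
  intros M; eapply Rle_trans.
  - apply (lsumR_seq_le_telescope _ (fun k => / (INR k + /2)) 4).
    + intros; apply inv_sq_ge0.
    + intros k; apply Rinv_ge0; pose proof (pos_INR k); lra.
    + intros k Hk; cbv beta; rewrite inv_sq_succ, S_INR.
      pose proof (pos_INR k) as Hy; set (y := INR k) in *.
      assert (/ (y + 1) ^ 2 <= / ((y + /2) * (y + 1 + /2))) by (apply Rinv_le_contravar; nra).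
      replace (/ (y + /2)) with (/ ((y + /2) * (y + 1 + /2)) + / (y + 1 + /2)) by (field; lra).
      lra.
  - unfold lsumR, inv_sq; cbn; lra.
Qed.

Lemma sum_bounded_inv_sq_sq : sum_bounded (fun x => inv_sq x ^ 2) sum_inv_4th_ub.
Proof.
  apply sum_bounded_even; [intros; apply pow2_ge_0 | unfold inv_sq; cbn; rewrite !Rmult_0_l, Rinv_0; lra
                          | intros; now rewrite inv_sq_opp |].
  intros M; eapply Rle_trans.
  - apply (lsumR_seq_le_telescope _ (fun k => / (9 * (INR k + /2))) 2).
    + intros; apply pow2_ge_0.
    + intros k; apply Rinv_ge0; pose proof (pos_INR k); lra.
    + intros k Hk; cbv beta; rewrite inv_sq_succ, S_INR, pow_inv.
      assert (Hy : 2 <= INR k) by (apply (le_INR 2) in Hk; exact Hk); set (y := INR k) in *.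
      assert (/ ((y + 1) ^ 2) ^ 2 <= / (9 * ((y + /2) * (y + 1 + /2)))).
      { apply Rinv_le_contravar; [nra|].
        assert (9 <= (y + 1) ^ 2) by nra; nra. }
      replace (/ (9 * (y + /2))) with (/ (9 * ((y + /2) * (y + 1 + /2))) + / (9 * (y + 1 + /2)))
        by (field; lra).
      lra.
  - unfold lsumR, inv_sq; cbn; lra.
Qed.

Lemma sum_bounded_inv_sq_mul (h : Z -> Z) :
  Injective h -> sum_bounded (fun x => inv_sq x * inv_sq (h x)) sum_inv_4th_ub.
Proof.
  intros Hh.
  apply (sum_bounded_le _ (fun x => / 2 * inv_sq x ^ 2 + / 2 * inv_sq (h x) ^ 2)).
  - intros x; pose proof (pow2_ge_0 (inv_sq x - inv_sq (h x))); nra.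
  - replace sum_inv_4th_ub with (/ 2 * sum_inv_4th_ub + / 2 * sum_inv_4th_ub) by field.
    apply sum_bounded_plus; apply sum_bounded_scal; try lra.
    + apply sum_bounded_inv_sq_sq.
    + apply (sum_bounded_comp (fun x => inv_sq x ^ 2)); [exact Hh | apply sum_bounded_inv_sq_sq].
Qed.

(** * Unconditional sums *)

Definition HasSumR {I : Type} (g : I -> R) (S : R) : Prop :=
  forall eps, 0 < eps -> exists A0 : list I,
    forall A, NoDup A -> incl A0 A -> Rabs (lsumR g A - S) < eps.

Section RealNets.
Context {I : Type}.
Implicit Types (g h : I -> R).

Lemma HasSumR_of_nonneg g B :
  (forall x, 0 <= g x) -> sum_bounded g B -> exists S, HasSumR g S.
Proof.
  intros Hg HB.
  set (E := fun x => exists F, NoDup F /\ x = lsumR g F).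
  assert (HbE : bound E) by (exists B; intros x [F [NF ->]]; auto).
  assert (HneE : exists x, E x) by (exists 0, []; split; [constructor | reflexivity]).
  destruct (completeness E HbE HneE) as [S [Hub Hlub]].
  exists S; intros eps Heps.
  destruct (classic (exists F, NoDup F /\ S - eps < lsumR g F)) as [[F [NF HF]]|Hno].
  - exists F; intros A NA HFA.
    assert (lsumR g F <= lsumR g A) by (apply lsumR_incl; auto).
    assert (lsumR g A <= S) by (apply Hub; exists A; auto).
    apply Rabs_def1; lra.
  - enough (S <= S - eps) by lra.
    apply Hlub; intros x [F [NF ->]]; apply Rnot_lt_le; intros Hlt; apply Hno; eauto.
Qed.

Lemma HasSumR_of_abs h B :
  sum_bounded (fun x => Rabs (h x)) B -> exists S, HasSumR h S.
Proof.
  intros HB.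
  destruct (HasSumR_of_nonneg (fun x => Rmax (h x) 0) B) as [S1 H1].
  { intros; apply Rmax_r. }
  { apply (sum_bounded_le _ _ _ (fun x => Rmax_lub _ _ _ (RRle_abs _) (Rabs_pos _)) HB). }
  destruct (HasSumR_of_nonneg (fun x => Rmax (- h x) 0) B) as [S2 H2].
  { intros; apply Rmax_r. }
  { apply (sum_bounded_le _ (fun x => Rabs (h x))); [|exact HB].
    intros x; rewrite <- Rabs_Ropp; apply Rmax_lub; [apply RRle_abs | apply Rabs_pos]. }
  exists (S1 - S2); intros eps Heps.
  destruct (H1 (eps / 2)) as [A1 HA1]; [lra|]; destruct (H2 (eps / 2)) as [A2 HA2]; [lra|].
  exists (A1 ++ A2); intros A NA HA.
  specialize (HA1 A NA (fun x Hx => HA x (in_or_app _ _ _ (or_introl Hx)))).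
  specialize (HA2 A NA (fun x Hx => HA x (in_or_app _ _ _ (or_intror Hx)))).
  rewrite (lsumR_ext h (fun x => Rmax (h x) 0 + - Rmax (- h x) 0)).
  - rewrite lsumR_plus, lsumR_opp.
    apply Rabs_def2 in HA1; apply Rabs_def2 in HA2; apply Rabs_def1; lra.
  - intros x _; unfold Rmax; destruct (Rle_dec (h x) 0), (Rle_dec (- h x) 0); lra.
Qed.

End RealNets.

Lemma lsum_fst {I : Type} (f : I -> C) L : fst (lsum f L) = lsumR (fun x => fst (f x)) L.
Proof.
  induction L as [|x L IH]; [reflexivity|].
  rewrite lsumR_cons, <- IH; reflexivity.
Qed.

Lemma lsum_snd {I : Type} (f : I -> C) L : snd (lsum f L) = lsumR (fun x => snd (f x)) L.
Proof.
  induction L as [|x L IH]; [reflexivity|].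
  rewrite lsumR_cons, <- IH; reflexivity.
Qed.

Lemma Cmod_lsum_le {I : Type} (f : I -> C) L : Cmod (lsum f L) <= lsumR (fun x => Cmod (f x)) L.
Proof.
  induction L as [|x L IH]; [unfold lsum; cbn; rewrite Cmod_0; lra|].
  eapply Rle_trans; [apply Cmod_triangle | rewrite lsumR_cons; apply Rplus_le_compat_l, IH].
Qed.

Lemma HasSum2_of_abs (f : Z * Z -> C) B :
  sum_bounded (fun p => Cmod (f p)) B -> exists S, HasSum2 f S.
Proof.
  intros HB.
  assert (Hre : forall p, Rabs (fst (f p)) <= Cmod (f p))
    by (intros; eapply Rle_trans; [apply Rmax_l | apply Rmax_Cmod]).
  assert (Him : forall p, Rabs (snd (f p)) <= Cmod (f p))
    by (intros; eapply Rle_trans; [apply Rmax_r | apply Rmax_Cmod]).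
  destruct (HasSumR_of_abs (fun p => fst (f p)) B (sum_bounded_le _ _ _ Hre HB)) as [S1 H1].
  destruct (HasSumR_of_abs (fun p => snd (f p)) B (sum_bounded_le _ _ _ Him HB)) as [S2 H2].
  exists (S1, S2); intros eps Heps.
  destruct (H1 (eps / 2)) as [A1 HA1]; [lra|]; destruct (H2 (eps / 2)) as [A2 HA2]; [lra|].
  exists (A1 ++ A2); intros A NA HA.
  specialize (HA1 A NA (fun x Hx => HA x (in_or_app _ _ _ (or_introl Hx)))).
  specialize (HA2 A NA (fun x Hx => HA x (in_or_app _ _ _ (or_intror Hx)))).
  rewrite <- lsum_fst in HA1; rewrite <- lsum_snd in HA2.
  destruct (lsum f A) as [a1 a2]; cbn [fst snd] in *.
  eapply Rle_lt_trans; [apply Cmod_le_abs_sum | cbn; unfold Rminus in *; lra].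
Qed.

Lemma Sum2_spec (f : Z * Z -> C) B :
  sum_bounded (fun p => Cmod (f p)) B -> HasSum2 f (Sum2 f).
Proof. intros HB; unfold Sum2; apply epsilon_spec, (HasSum2_of_abs f B HB). Qed.

Definition Zpair_eq_dec : forall x y : Z * Z, {x = y} + {x <> y}.
Proof. decide equality; apply Z.eq_dec. Defined.

Lemma HasSum2_Cmod_le (f : Z * Z -> C) S : HasSum2 f S ->
  forall eps, 0 < eps -> exists F, NoDup F /\ Cmod S <= lsumR (fun p => Cmod (f p)) F + eps.
Proof.
  intros H eps Heps; destruct (H eps Heps) as [A0 HA].
  set (F := nodup Zpair_eq_dec A0).
  specialize (HA F (NoDup_nodup _ _) (fun x Hx => proj2 (nodup_In _ _ _) Hx)).
  exists F; split; [apply NoDup_nodup|].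
  pose proof (Cmod_lsum_le f F).
  replace S with (Cplus (lsum f F) (Copp (Cminus (lsum f F) S))) at 1
    by (destruct (lsum f F), S; unfold Cminus, Cplus, Copp; cbn; f_equal; ring).
  eapply Rle_trans; [apply Cmod_triangle | rewrite Cmod_opp; lra].
Qed.

Lemma HasSum2_lsumR_approx (f : Z -> Z * Z -> C) (W : Z -> C) (c : Z -> R) eps :
  (forall k, 0 <= c k) -> (forall k, HasSum2 (f k) (W k)) -> 0 < eps ->
  forall L, NoDup L -> exists T, NoDup T /\ (forall q, In q T -> In (fst q) L) /\
    lsumR (fun k => c k * Cmod (W k)) L <=
    lsumR (fun q => c (fst q) * Cmod (f (fst q) (snd q))) T + eps * lsumR c L.
Proof.
  intros Hc HW Heps L NL; induction NL as [|k L Hk NL IH].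
  - exists []; repeat split; [constructor | intros q [] | unfold lsumR; cbn; lra].
  - destruct IH as [T [NT [HT HTsum]]].
    destruct (HasSum2_Cmod_le (f k) (W k) (HW k) eps Heps) as [F [NF HF]].
    exists (map (fun p => (k, p)) F ++ T); repeat split.
    + apply NoDup_app; auto.
      * apply Injective_map_NoDup; [intros ? ? E; now injection E | exact NF].
      * intros q Hq1 Hq2; apply in_map_iff in Hq1 as [p [<- _]]; exact (Hk (HT _ Hq2)).
    + intros q Hq; apply in_app_or in Hq as [Hq|Hq].
      * apply in_map_iff in Hq as [p [<- _]]; left; reflexivity.
      * right; auto.
    + rewrite !lsumR_cons, lsumR_app, lsumR_map; cbn [fst snd].
      rewrite (lsumR_scal (c k) (fun p => Cmod (f k p))).
      assert (c k * Cmod (W k) <= c k * (lsumR (fun p => Cmod (f k p)) F + eps))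
        by (apply Rmult_le_compat_l; auto).
      lra.
Qed.

Definition zabs (k : Z) : R := IZR (Z.abs k).

Lemma zabs_pos k : k <> 0%Z -> 0 < zabs k.
Proof. intros; unfold zabs; apply IZR_lt; lia. Qed.

Lemma zabs_Rpower_le k1 k2 k3 s : k1 <> 0%Z -> k2 <> 0%Z -> k3 <> 0%Z -> (k1 + k2 + k3 <> 0)%Z ->
  0 < s <= 1 ->
  Rpower (zabs (k1 + k2 + k3)) s <= Rpower (zabs k1) s + Rpower (zabs k2) s + Rpower (zabs k3) s.
Proof.
  intros H1 H2 H3 H Hs.
  pose proof (zabs_pos _ H1); pose proof (zabs_pos _ H2); pose proof (zabs_pos _ H3).
  apply Rle_trans with (Rpower (zabs k1 + zabs k2 + zabs k3) s).
  - apply Rle_Rpower_l; [lra|]; split; [apply zabs_pos, H|].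
    unfold zabs; rewrite <- !plus_IZR; apply IZR_le; lia.
  - eapply Rle_trans; [apply Rpower_plus_le; lra|].
    pose proof (Rpower_plus_le (zabs k1) (zabs k2) s); lra.
Qed.

(* [Rpower 0 s = 1] in Stdlib, hence the explicit case [k = 0]. *)
Definition wcoef (s : R) (v : seqC) (k : Z) : R :=
  if (k =? 0)%Z then 0 else Rpower (zabs k) s * Cmod (v k).

Lemma wcoef_ge0 s v k : 0 <= wcoef s v k.
Proof.
  unfold wcoef; destruct (k =? 0)%Z; [lra|].
  apply Rmult_le_pos; [apply Rlt_le, exp_pos | apply Cmod_ge_0].
Qed.

Lemma wcoef_nz s v k : k <> 0%Z -> wcoef s v k = Rpower (zabs k) s * Cmod (v k).
Proof. intros Hk; unfold wcoef; now rewrite (proj2 (Z.eqb_neq k 0) Hk). Qed.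

Lemma wcoef_0 v k : k <> 0%Z -> wcoef 0 v k = Cmod (v k).
Proof. intros Hk; rewrite wcoef_nz, Rpower_O by (auto using zabs_pos); ring. Qed.

Lemma wcoef_le_wcoef s' s v k : 0 <= s' <= s -> wcoef s' v k <= wcoef s v k.
Proof.
  intros Hs; destruct (Z.eq_dec k 0) as [->|Hk]; [unfold wcoef; cbn; lra|].
  rewrite !wcoef_nz by exact Hk; apply Rmult_le_compat_r; [apply Cmod_ge_0|].
  apply Rle_Rpower; [unfold zabs; apply IZR_le; lia | lra].
Qed.

Lemma sum_bounded_wcoef_sq_iff s v B :
  sum_bounded (fun k => wcoef s v k ^ 2) B <->
  (forall A, NoDup A -> (forall k, In k A -> k <> 0%Z) ->
     lsumR (fun k => Rpower (IZR (Z.abs k)) (2 * s) * (Cmod (v k))^2) A <= B).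
Proof.
  assert (Hterm : forall k, k <> 0%Z ->
            wcoef s v k ^ 2 = Rpower (IZR (Z.abs k)) (2 * s) * (Cmod (v k))^2)
    by (intros; rewrite wcoef_nz, Rpow_mult_distr, Rpower_sq by auto; reflexivity).
  split.
  - intros HB A NA HA; rewrite <- (lsumR_ext (fun k => wcoef s v k ^ 2)); [apply HB, NA|].
    intros; apply Hterm, HA; auto.
  - intros HB A NA.
    rewrite (lsumR_filter_zero (fun x => negb (x =? 0)%Z)).
    2:{ intros x Hx; destruct (x =? 0)%Z eqn:E; [|discriminate].
        apply Z.eqb_eq in E as ->; unfold wcoef; cbn; ring. }
    assert (Hnz : forall k, In k (filter (fun x => negb (x =? 0)%Z) A) -> k <> 0%Z)
      by (intros k Hk; apply filter_In in Hk as [_ Hk]; now apply Bool.negb_true_iff, Z.eqb_neq in Hk).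
    rewrite (lsumR_ext _ (fun k => Rpower (IZR (Z.abs k)) (2 * s) * (Cmod (v k))^2))
      by (intros; apply Hterm, Hnz; auto).
    apply HB; [apply NoDup_filter, NA | exact Hnz].
Qed.

Lemma in_Hdot_of_sum_bounded s v B :
  sum_bounded (fun k => wcoef s v k ^ 2) B -> in_Hdot s v /\ real (hsnorm2 s v) <= B.
Proof.
  intros HB; pose proof (proj1 (sum_bounded_wcoef_sq_iff s v B) HB) as HA; clear HB.
  unfold in_Hdot, hsnorm2; match goal with |- context [Lub_Rbar ?E] =>
    destruct (Lub_Rbar_correct E) as [Hub Hlub]; set (l := Lub_Rbar E) in * end.
  assert (H0 : Rbar_le 0 l).
  { apply Hub; exists []; repeat split; [constructor | intros k []]. }
  assert (H1 : Rbar_le l B).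
  { apply Hlub; intros x [A [NA [HA0 ->]]]; apply HA; auto. }
  clearbody l; destruct l; cbn in *; try contradiction; split; [reflexivity | exact H1].
Qed.

Lemma sum_bounded_wcoef_sq s v :
  in_Hdot s v -> sum_bounded (fun k => wcoef s v k ^ 2) (real (hsnorm2 s v)).
Proof.
  intros Hv; apply (proj2 (sum_bounded_wcoef_sq_iff _ _ _)); intros A NA HA.
  unfold in_Hdot, is_finite, hsnorm2 in *; match goal with |- context [Lub_Rbar ?E] =>
    destruct (Lub_Rbar_correct E) as [Hub _]; set (l := Lub_Rbar E) in * end.
  assert (H : Rbar_le (lsumR (fun k => Rpower (IZR (Z.abs k)) (2 * s) * (Cmod (v k))^2) A)
                      l) by (apply Hub; eauto).
  rewrite <- Hv in H; exact H.
Qed.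

Lemma in_Hdot_anti s' s v : 0 <= s' <= s -> in_Hdot s v -> in_Hdot s' v.
Proof.
  intros Hs Hv; apply (in_Hdot_of_sum_bounded s' v (real (hsnorm2 s v))).
  apply (sum_bounded_le _ (fun k => wcoef s v k ^ 2)); [|apply sum_bounded_wcoef_sq, Hv].
  intros k; pose proof (wcoef_ge0 s' v k); pose proof (wcoef_le_wcoef s' s v k Hs).
  apply pow_incr; lra.
Qed.

Definition wcoef3 (s1 s2 s3 : R) (v : seqC) (k : Z) (p : Z * Z) : R :=
  wcoef s1 v (fst p) * wcoef s2 v (snd p) * wcoef s3 v (k - fst p - snd p)%Z.

Lemma sum_bounded_wcoef3_sq s1 s2 s3 v B1 B2 B3 :
  sum_bounded (fun k => wcoef s1 v k ^ 2) B1 -> sum_bounded (fun k => wcoef s2 v k ^ 2) B2 ->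
  sum_bounded (fun k => wcoef s3 v k ^ 2) B3 ->
  sum_bounded (fun q : Z * (Z * Z) => wcoef3 s1 s2 s3 v (fst q) (snd q) ^ 2) (B1 * B2 * B3).
Proof.
  intros HB1 HB2 HB3.
  apply (sum_bounded_le _ (fun q : Z * (Z * Z) =>
            wcoef s1 v (fst (snd q)) ^ 2 * wcoef s2 v (snd (snd q)) ^ 2
                            * wcoef s3 v (fst q - fst (snd q) - snd (snd q))%Z ^ 2)).
  { intros q; apply Req_le; unfold wcoef3; ring. }
  apply (sum_bounded_trilinear (fun k => wcoef s1 v k ^ 2) (fun k => wcoef s2 v k ^ 2)
           (fun k => wcoef s3 v k ^ 2)); auto; intros; apply pow2_ge_0.
Qed.

(** * The kernel of B30 *)

(* With k3 = k - k1 - k2: (k1+k2)(k2+k3)(k3+k1) = (k1+k2)(k-k1)(k-k2); the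
   cut-off on |k2|, |k3| accounts for the projections Pi_{-n}. *)
Definition B30_kernel (n : nat) (k : Z) (p : Z * Z) : R :=
  let k1 := fst p in let k2 := snd p in
  if ((Z.of_nat n <? Z.abs k2) && (Z.of_nat n <? Z.abs (k - k1 - k2)))%Z
  then / Rabs (IZR (k1 * (k1 + k2) * (k - k1) * (k - k2))) else 0.

Lemma B30_kernel_ge0 n k p : 0 <= B30_kernel n k p.
Proof. unfold B30_kernel; destruct (_ && _); [apply Rinv_ge0, Rabs_pos | lra]. Qed.

Lemma B30_kernel_nz n k p : B30_kernel n k p <> 0 ->
  (Z.of_nat n < Z.abs (snd p))%Z /\ (Z.of_nat n < Z.abs (k - fst p - snd p))%Z /\
  B30_kernel n k p = / Rabs (IZR (fst p * (fst p + snd p) * (k - fst p) * (k - snd p))) /\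
  (fst p * (fst p + snd p) * (k - fst p) * (k - snd p) <> 0)%Z.
Proof.
  unfold B30_kernel; destruct (_ <? _)%Z eqn:E2, (_ <? Z.abs (k - _ - _))%Z eqn:E3;
    cbn; try (intros H; contradiction).
  apply Z.ltb_lt in E2, E3; intros H; repeat split; auto.
  intros E; apply H; rewrite E, Rabs_R0, Rinv_0; reflexivity.
Qed.

Lemma Cmod_B30_term_le n t u v w k p :
  Cmod (B30_term n t u v w k p) <=
  B30_kernel n k p * (Cmod (u (fst p)) * Cmod (v (snd p)) * Cmod (w (k - fst p - snd p)%Z)).
Proof.
  destruct p as [k1 k2]; cbn [fst snd].
  assert (Hrhs : 0 <= B30_kernel n k (k1, k2) * (Cmod (u k1) * Cmod (v k2) * Cmod (w (k - k1 - k2)%Z)))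
    by (apply Rmult_le_pos; [apply B30_kernel_ge0 | repeat apply Rmult_le_pos; apply Cmod_ge_0]).
  unfold B30_term; cbn [fst snd]; set (k3 := (k - k1 - k2)%Z) in *.
  destruct (_ || _)%Z eqn:Hres; [rewrite Cmod_0; exact Hrhs|].
  repeat rewrite orb_false_iff in Hres; destruct Hres as [[[E1 E2] E3] E4].
  apply Z.eqb_neq in E4.
  unfold Pi_neg at 1 2; destruct (Z.abs k2 <=? Z.of_nat n)%Z eqn:S2.
  { rewrite Cmult_0_r, Cmult_0_l, Cmod_0; exact Hrhs. }
  destruct (Z.abs k3 <=? Z.of_nat n)%Z eqn:S3.
  { rewrite Cmult_0_r, Cmod_0; exact Hrhs. }
  assert (Hker : B30_kernel n k (k1, k2) = / Rabs (IZR (k1 * (k1 + k2) * (k2 + k3) * (k3 + k1)))).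
  { unfold B30_kernel; cbn [fst snd]; fold k3.
    apply Z.leb_gt, Z.ltb_lt in S2; apply Z.leb_gt, Z.ltb_lt in S3; rewrite S2, S3; cbn.
    do 3 f_equal; unfold k3; ring. }
  assert (HD : IZR (k1 * (k1 + k2) * (k2 + k3) * (k3 + k1)) <> 0).
  { apply not_0_IZR; apply Z.eqb_neq in E1; intros E; apply E4; nia. }
  rewrite Hker, !Cmod_mult, Cmod_div, Cmod_cexpi, Cmod_R; [|intros E; apply HD; now injection E].
  unfold Rdiv; rewrite Rmult_1_l, !Rmult_assoc; apply Rmult_le_compat_l; [apply Rinv_ge0, Rabs_pos|].
  lra.
Qed.

Lemma cutoff_sq_le (m k1 k2 k3 : Z) : (0 <= m)%Z -> (m < Z.abs k2)%Z -> (m < Z.abs k3)%Z ->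
  (4 * ((m + 1) * (m + 1)) <=
   (k2 + k3) * (k2 + k3) + 2 * ((k1 + k2) * (k1 + k2)) + 2 * ((k1 + k3) * (k1 + k3)))%Z.
Proof.
  intros Hm H2 H3.
  assert ((m + 1) * (m + 1) <= k2 * k2)%Z
    by (rewrite <- (Z.abs_square k2); apply Z.mul_le_mono_nonneg; lia).
  assert ((m + 1) * (m + 1) <= k3 * k3)%Z
    by (rewrite <- (Z.abs_square k3); apply Z.mul_le_mono_nonneg; lia).
  assert (0 <= (2 * k1 + k2 + k3) * (2 * k1 + k2 + k3))%Z by apply Z.square_nonneg.
  replace ((k2 + k3) * (k2 + k3) + 2 * ((k1 + k2) * (k1 + k2)) + 2 * ((k1 + k3) * (k1 + k3)))%Z
    with (2 * (k2 * k2) + 2 * (k3 * k3) + (2 * k1 + k2 + k3) * (2 * k1 + k2 + k3))%Z by ring.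
  lia.
Qed.

(* Each of the three terms cancels one factor of 1/(abcd)^2 against c^2, b^2, d^2. *)
Lemma inv_prod_sq_le (a b c d N : R) : 0 < N -> 4 * N ^ 2 <= c ^ 2 + 2 * b ^ 2 + 2 * d ^ 2 ->
  (/ Rabs (a * b * c * d)) ^ 2 <=
  (/ a ^ 2 * / b ^ 2 * / d ^ 2 + 2 * (/ a ^ 2 * / c ^ 2 * / d ^ 2)
   + 2 * (/ a ^ 2 * / b ^ 2 * / c ^ 2)) / (4 * N ^ 2).
Proof.
  intros HN Hcut.
  assert (Hrhs : 0 <= (/ a ^ 2 * / b ^ 2 * / d ^ 2 + 2 * (/ a ^ 2 * / c ^ 2 * / d ^ 2)
                       + 2 * (/ a ^ 2 * / b ^ 2 * / c ^ 2)) / (4 * N ^ 2)).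
  { assert (forall x, 0 <= / x ^ 2) by (intros; apply Rinv_ge0, pow2_ge_0).
    apply Rmult_le_pos; [|apply Rinv_ge0; nra].
    repeat apply Rplus_le_le_0_compat; repeat apply Rmult_le_pos; auto; lra. }
  destruct (Req_dec (a * b * c * d) 0) as [E|E].
  { rewrite E, Rabs_R0, Rinv_0; cbn; rewrite Rmult_0_l. exact Hrhs. }
  assert (a <> 0 /\ b <> 0 /\ c <> 0 /\ d <> 0) as (Ha & Hb & Hc & Hd)
    by (repeat split; intros ->; apply E; ring).
  rewrite <- Rabs_inv, <- Rsqr_pow2, <- Rsqr_abs, Rsqr_pow2.
  replace ((/ a ^ 2 * / b ^ 2 * / d ^ 2 + 2 * (/ a ^ 2 * / c ^ 2 * / d ^ 2)
            + 2 * (/ a ^ 2 * / b ^ 2 * / c ^ 2)) / (4 * N ^ 2))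
    with ((c ^ 2 + 2 * b ^ 2 + 2 * d ^ 2) / (4 * N ^ 2) * (/ (a * b * c * d)) ^ 2)
    by (field; repeat split; auto; lra).
  rewrite <- (Rmult_1_l ((/ (a * b * c * d)) ^ 2)) at 1.
  apply Rmult_le_compat_r; [apply pow2_ge_0|].
  apply (Rmult_le_reg_r (4 * N ^ 2)); [nra|].
  unfold Rdiv; rewrite Rmult_assoc, Rinv_l by nra; lra.
Qed.

Definition B30_kernel_sq_ub (n : nat) (k : Z) (p : Z * Z) : R :=
  let k1 := fst p in let k2 := snd p in
  (inv_sq k1 * inv_sq (k1 + k2) * inv_sq (k - k2) + 2 * (inv_sq k1 * inv_sq (k - k1) * inv_sq (k - k2))
   + 2 * (inv_sq k1 * inv_sq (k1 + k2) * inv_sq (k - k1))) / (4 * (INR n + 1) ^ 2).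

Lemma B30_kernel_sq_le n k p : B30_kernel n k p ^ 2 <= B30_kernel_sq_ub n k p.
Proof.
  destruct (Req_dec (B30_kernel n k p) 0) as [E|E].
  - rewrite E; unfold B30_kernel_sq_ub; pose proof (pos_INR n).
    assert (forall x, 0 <= inv_sq x) by apply inv_sq_ge0.
    cbn; rewrite Rmult_0_l; apply Rmult_le_pos; [|apply Rinv_ge0; nra].
    repeat apply Rplus_le_le_0_compat; repeat apply Rmult_le_pos; auto; lra.
  - apply B30_kernel_nz in E as (H2 & H3 & -> & _).
    destruct p as [k1 k2]; cbn [fst snd] in *.
    pose proof (cutoff_sq_le (Z.of_nat n) k1 k2 (k - k1 - k2) (Nat2Z.is_nonneg n) H2 H3) as Hcut.
    apply IZR_le in Hcut; repeat rewrite ?mult_IZR, ?plus_IZR in Hcut; rewrite <- INR_IZR_INZ in Hcut.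
    unfold B30_kernel_sq_ub, inv_sq; cbn [fst snd]; rewrite !mult_IZR.
    apply inv_prod_sq_le; [pose proof (pos_INR n); lra|].
    replace (k - k1)%Z with (k2 + (k - k1 - k2))%Z by ring.
    replace (k - k2)%Z with (k1 + (k - k1 - k2))%Z by ring.
    rewrite !plus_IZR; lra.
Qed.

Definition B30_kernel_sq_sum_ub (n : nat) : R :=
  5 * sum_inv_sq_ub * sum_inv_4th_ub / (4 * (INR n + 1) ^ 2).

Lemma B30_kernel_sq_sum_ub_pos n : 0 < B30_kernel_sq_sum_ub n.
Proof.
  unfold B30_kernel_sq_sum_ub, sum_inv_sq_ub, sum_inv_4th_ub; pose proof (pos_INR n).
  apply Rdiv_lt_0_compat; nra.
Qed.

Lemma sum_bounded_inv_sq_mul_pairs (h1 : Z -> Z) (h2 : Z -> Z -> Z) :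
  Injective h1 -> (forall x, Injective (h2 x)) ->
  sum_bounded (fun p => inv_sq (fst p) * inv_sq (h1 (fst p)) * inv_sq (h2 (fst p) (snd p)))
    (sum_inv_sq_ub * sum_inv_4th_ub).
Proof.
  intros Hh1 Hh2.
  apply (sum_bounded_pairs Z.eq_dec (fun x => inv_sq x * inv_sq (h1 x))
           (fun q => inv_sq (h2 (fst q) (snd q)))).
  - unfold sum_inv_sq_ub; lra.
  - intros; apply Rmult_le_pos; apply inv_sq_ge0.
  - intros; apply inv_sq_ge0.
  - apply sum_bounded_inv_sq_mul, Hh1.
  - intros x; apply (sum_bounded_comp inv_sq (h2 x)); [apply Hh2 | apply sum_bounded_inv_sq].
Qed.

Lemma sum_bounded_inv_sq_pairs_mul (h1 : Z -> Z) (h2 : Z -> Z -> Z) :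
  Injective h1 -> (forall x, Injective (h2 x)) ->
  sum_bounded (fun p => inv_sq (h1 (fst p)) * (inv_sq (snd p) * inv_sq (h2 (fst p) (snd p))))
    (sum_inv_4th_ub * sum_inv_sq_ub).
Proof.
  intros Hh1 Hh2.
  apply (sum_bounded_pairs Z.eq_dec (fun x => inv_sq (h1 x))
           (fun q => inv_sq (snd q) * inv_sq (h2 (fst q) (snd q)))).
  - unfold sum_inv_4th_ub; lra.
  - intros; apply inv_sq_ge0.
  - intros; apply Rmult_le_pos; apply inv_sq_ge0.
  - apply (sum_bounded_comp inv_sq h1); [apply Hh1 | apply sum_bounded_inv_sq].
  - intros x; apply (sum_bounded_inv_sq_mul (h2 x)), Hh2.
Qed.

Lemma sum_bounded_B30_kernel_sq_ub n k :
  sum_bounded (B30_kernel_sq_ub n k) (B30_kernel_sq_sum_ub n).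
Proof.
  set (S2 := sum_inv_sq_ub); set (S4 := sum_inv_4th_ub).
  assert (T1 : sum_bounded (fun p => inv_sq (fst p) * inv_sq (fst p + snd p) * inv_sq (k - snd p))
                 (S4 * S2)).
  { set (swap := fun p : Z * Z => (snd p, fst p)).
    set (g := fun q : Z * Z => inv_sq (k - fst q) * (inv_sq (snd q) * inv_sq (snd q + fst q))).
    apply (sum_bounded_le _ (fun p => g (swap p))); [intros p; unfold g; cbn; lra|].
    apply (sum_bounded_comp g swap); [intros [] [] E; cbn in E; now injection E as -> ->|].
    apply (sum_bounded_inv_sq_pairs_mul (fun y => k - y)%Z (fun x y => y + x)%Z);
      [|intros x]; intros ? ? ?; lia. }
  assert (T2 : sum_bounded (fun p => inv_sq (fst p) * inv_sq (k - fst p) * inv_sq (k - snd p))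
                 (S2 * S4)).
  { apply (sum_bounded_inv_sq_mul_pairs (fun x => k - x)%Z (fun _ y => k - y)%Z);
      [|intros x]; intros ? ? ?; lia. }
  assert (T3 : sum_bounded (fun p => inv_sq (fst p) * inv_sq (k - fst p) * inv_sq (fst p + snd p))
                 (S2 * S4)).
  { apply (sum_bounded_inv_sq_mul_pairs (fun x => k - x)%Z (fun x y => x + y)%Z);
      [|intros x]; intros ? ? ?; lia. }
  set (c := / (4 * (INR n + 1) ^ 2)).
  assert (Hc : 0 <= c) by (apply Rinv_ge0; pose proof (pos_INR n); nra).
  unfold B30_kernel_sq_ub, B30_kernel_sq_sum_ub; fold S2 S4.
  replace (5 * S2 * S4 / (4 * (INR n + 1) ^ 2)) with (c * (S4 * S2 + 2 * (S2 * S4) + 2 * (S2 * S4)))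
    by (unfold c, Rdiv; ring).
  apply (sum_bounded_le _ (fun p => c *
     (inv_sq (fst p) * inv_sq (fst p + snd p) * inv_sq (k - snd p)
      + 2 * (inv_sq (fst p) * inv_sq (k - fst p) * inv_sq (k - snd p))
      + 2 * (inv_sq (fst p) * inv_sq (k - fst p) * inv_sq (fst p + snd p))))).
  { intros; unfold c, Rdiv; lra. }
  apply sum_bounded_scal; auto.
  repeat apply sum_bounded_plus; auto; apply sum_bounded_scal; auto; lra.
Qed.

Lemma Cmod_B30_term_le_wcoef3 n t v k p :
  Cmod (B30_term n t v v v k p) <= B30_kernel n k p * wcoef3 0 0 0 v k p.
Proof.
  eapply Rle_trans; [apply Cmod_B30_term_le|].
  destruct (Req_dec (B30_kernel n k p) 0) as [E|E]; [rewrite E, !Rmult_0_l; lra|].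
  apply B30_kernel_nz in E as (H2 & H3 & _ & HD).
  unfold wcoef3; rewrite !wcoef_0 by lia; lra.
Qed.

Lemma Rpower_mul_Cmod_B30_term_le s n t v k p : 0 < s <= 1 -> k <> 0%Z ->
  Rpower (zabs k) s * Cmod (B30_term n t v v v k p) <=
  B30_kernel n k p * (wcoef3 s 0 0 v k p + wcoef3 0 s 0 v k p + wcoef3 0 0 s v k p).
Proof.
  intros Hs Hk.
  eapply Rle_trans;
    [apply Rmult_le_compat_l; [apply Rlt_le, exp_pos | apply Cmod_B30_term_le_wcoef3]|].
  destruct (Req_dec (B30_kernel n k p) 0) as [E|E]; [rewrite E; lra|].
  pose proof (B30_kernel_ge0 n k p).
  apply B30_kernel_nz in E as (H2 & H3 & _ & HD).
  assert (H1 : fst p <> 0%Z) by (intros E; apply HD; rewrite E; ring).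
  assert (H2' : snd p <> 0%Z) by lia.
  assert (H3' : (k - fst p - snd p <> 0)%Z) by lia.
  pose proof (zabs_Rpower_le (fst p) (snd p) (k - fst p - snd p) s H1 H2' H3'
                ltac:(lia) Hs) as Hsub.
  replace (fst p + snd p + (k - fst p - snd p))%Z with k in Hsub by ring.
  unfold wcoef3; rewrite !wcoef_0, !wcoef_nz by lia.
  set (c := Cmod (v (fst p)) * Cmod (v (snd p)) * Cmod (v (k - fst p - snd p)%Z)).
  assert (0 <= B30_kernel n k p * c)
    by (apply Rmult_le_pos; [|unfold c; repeat apply Rmult_le_pos]; auto using Cmod_ge_0).
  apply Rle_trans with
    ((Rpower (zabs (fst p)) s + Rpower (zabs (snd p)) s + Rpower (zabs (k - fst p - snd p)) s) *
     (B30_kernel n k p * c)); [apply Rmult_le_compat_r; auto | unfold c; lra].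
Qed.

Section MainEstimate.
Variables (s : R) (n : nat) (t : R) (v : seqC).
Hypothesis Hs : 0 < s <= 1.
Hypothesis Hv : in_Hdot s v.

Let H0 := real (hsnorm2 0 v).
Let Hsn := real (hsnorm2 s v).
Let M := B30_kernel_sq_sum_ub n.

Lemma sum_bounded_wcoef0_sq : sum_bounded (fun k => wcoef 0 v k ^ 2) H0.
Proof. apply sum_bounded_wcoef_sq, (in_Hdot_anti 0 s); [lra | exact Hv]. Qed.

Lemma sum_bounded_wcoefs_sq : sum_bounded (fun k => wcoef s v k ^ 2) Hsn.
Proof. apply sum_bounded_wcoef_sq, Hv. Qed.

Lemma sum_bounded_Cmod_B30_term k :
  sum_bounded (fun p => Cmod (B30_term n t v v v k p)) ((M + H0 ^ 3) / 2).
Proof.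
  apply (sum_bounded_le _ (fun p => / 2 * B30_kernel_sq_ub n k p + / 2 * wcoef3 0 0 0 v k p ^ 2)).
  - intros p; eapply Rle_trans; [apply Cmod_B30_term_le_wcoef3|].
    pose proof (B30_kernel_sq_le n k p).
    pose proof (Rmult_le_amgm (B30_kernel n k p) (wcoef3 0 0 0 v k p) 1 Rlt_0_1); lra.
  - replace ((M + H0 ^ 3) / 2) with (/ 2 * M + / 2 * (H0 * H0 * H0)) by (cbn; field).
    apply sum_bounded_plus; apply sum_bounded_scal; try lra.
    + apply sum_bounded_B30_kernel_sq_ub.
    + apply (sum_bounded_comp (fun q : Z * (Z * Z) => wcoef3 0 0 0 v (fst q) (snd q) ^ 2)
               (fun p => (k, p))).
      * intros ? ? E; now injection E.
      * apply sum_bounded_wcoef3_sq; apply sum_bounded_wcoef0_sq.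
Qed.

Lemma B30_HasSum2 k : HasSum2 (B30_term n t v v v k) (B30 n t v v v k).
Proof. apply (Sum2_spec _ _ (sum_bounded_Cmod_B30_term k)). Qed.

Lemma lsumR_kernel_weighted_sq_le (c : Z -> R) L T :
  NoDup L -> NoDup T -> (forall q, In q T -> In (fst q) L) ->
  lsumR (fun q => (c (fst q) * B30_kernel n (fst q) (snd q)) ^ 2) T <= M * lsumR (fun k => c k ^ 2) L.
Proof.
  intros NL NT HT.
  apply (lsumR_pairs_le Z.eq_dec _ (fun k => c k ^ 2) (fun q => B30_kernel n (fst q) (snd q) ^ 2));
    auto; intros; try apply pow2_ge_0.
  - apply (sum_bounded_le _ (B30_kernel_sq_ub n x)); [intros; apply B30_kernel_sq_le|].
    apply sum_bounded_B30_kernel_sq_ub.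
  - apply Req_le, Rpow_mult_distr.
Qed.

Definition wcoef3_weighted (k : Z) (p : Z * Z) : R :=
  wcoef3 s 0 0 v k p + wcoef3 0 s 0 v k p + wcoef3 0 0 s v k p.

Lemma sum_bounded_wcoef3_weighted_sq :
  sum_bounded (fun q => wcoef3_weighted (fst q) (snd q) ^ 2) (9 * Hsn * H0 ^ 2).
Proof.
  apply (sum_bounded_le _ (fun q => 3 * (wcoef3 s 0 0 v (fst q) (snd q) ^ 2 +
           wcoef3 0 s 0 v (fst q) (snd q) ^ 2 + wcoef3 0 0 s v (fst q) (snd q) ^ 2))).
  - intros q; unfold wcoef3_weighted.
    set (x := wcoef3 s 0 0 v _ _); set (y := wcoef3 0 s 0 v _ _); set (z := wcoef3 0 0 s v _ _).
    pose proof (pow2_ge_0 (x - y)); pose proof (pow2_ge_0 (y - z)); pose proof (pow2_ge_0 (x - z)); nra.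
  - replace (9 * Hsn * H0 ^ 2) with (3 * (Hsn * H0 * H0 + H0 * Hsn * H0 + H0 * H0 * Hsn)) by ring.
    pose proof sum_bounded_wcoef0_sq; pose proof sum_bounded_wcoefs_sq.
    apply sum_bounded_scal; [lra|]; repeat apply sum_bounded_plus; apply sum_bounded_wcoef3_sq; auto.
Qed.

Lemma wcoef_Rpower_Cmod_B30_term_le (w : seqC) k p :
  wcoef s w k * Rpower (zabs k) s * Cmod (B30_term n t v v v k p) <=
  (wcoef s w k * B30_kernel n k p) ^ 2 / (2 * M) + M * wcoef3_weighted k p ^ 2 / 2.
Proof.
  eapply Rle_trans; [|apply Rmult_le_amgm, B30_kernel_sq_sum_ub_pos].
  destruct (Z.eq_dec k 0) as [->|Hk]; [unfold wcoef; cbn; lra|].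
  rewrite !Rmult_assoc; apply Rmult_le_compat_l; [apply wcoef_ge0|].
  apply Rpower_mul_Cmod_B30_term_le; auto.
Qed.

(* With e_k = |k|^s |B_k| and G = sum e_k^2, the previous lemma gives
   G <= G/2 + 9 M |v|_s^2 |v|_0^4 / 2 up to epsilon. *)
Lemma sum_bounded_wcoef_B30_sq :
  sum_bounded (fun k => wcoef s (B30 n t v v v) k ^ 2) (9 * M * Hsn * H0 ^ 2).
Proof.
  intros L NL.
  set (W := B30 n t v v v); set (e := wcoef s W); set (r := fun k => Rpower (zabs k) s).
  assert (Hr : forall k, 0 <= r k) by (intros; apply Rlt_le, exp_pos).
  assert (He : forall k, 0 <= e k) by (intros; apply wcoef_ge0).
  assert (Her : forall k, e k ^ 2 = e k * r k * Cmod (W k)).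
  { intros k; destruct (Z.eq_dec k 0) as [->|Hk]; [unfold e, wcoef; cbn; ring|].
    unfold e, r; rewrite wcoef_nz by exact Hk; ring. }
  assert (HM : 0 < M) by apply B30_kernel_sq_sum_ub_pos.
  set (G := lsumR (fun k => e k ^ 2) L).
  apply (le_of_le_plus_mul _ _ (2 * lsumR (fun k => e k * r k) L)).
  { apply Rmult_le_pos; [lra | apply lsumR_ge0; intros; apply Rmult_le_pos; auto]. }
  intros eps Heps.
  destruct (HasSum2_lsumR_approx (B30_term n t v v v) W (fun k => e k * r k) eps
              (fun k => Rmult_le_pos _ _ (He k) (Hr k)) B30_HasSum2 Heps L NL) as [T [NT [HT Happrox]]].
  rewrite <- (lsumR_ext _ _ _ (fun k _ => Her k)) in Happrox; fold G in Happrox.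
  assert (Hpt : forall q, In q T -> e (fst q) * r (fst q) * Cmod (B30_term n t v v v (fst q) (snd q)) <=
            (e (fst q) * B30_kernel n (fst q) (snd q)) ^ 2 / (2 * M)
            + M * wcoef3_weighted (fst q) (snd q) ^ 2 / 2)
    by (intros; apply wcoef_Rpower_Cmod_B30_term_le).
  assert (Hsum := lsumR_le _ _ T Hpt).
  rewrite lsumR_plus in Hsum.
  assert (HK := lsumR_kernel_weighted_sq_le e L T NL NT HT).
  assert (HZ := sum_bounded_wcoef3_weighted_sq T NT).
  assert (Hfirst : lsumR (fun q => (e (fst q) * B30_kernel n (fst q) (snd q)) ^ 2 / (2 * M)) T
                   <= G / 2).
  { rewrite (lsumR_ext _ (fun q => / (2 * M) * (e (fst q) * B30_kernel n (fst q) (snd q)) ^ 2))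
      by (intros; unfold Rdiv; ring).
    rewrite lsumR_scal; fold G in HK.
    apply Rle_trans with (/ (2 * M) * (M * G)); [apply Rmult_le_compat_l; [apply Rinv_ge0|]; lra|].
    right; field; lra. }
  assert (Hsecond : lsumR (fun q => M * wcoef3_weighted (fst q) (snd q) ^ 2 / 2) T
                    <= M * (9 * Hsn * H0 ^ 2) / 2).
  { rewrite (lsumR_ext _ (fun q => M / 2 * wcoef3_weighted (fst q) (snd q) ^ 2))
      by (intros; unfold Rdiv; ring).
    rewrite lsumR_scal; apply Rle_trans with (M / 2 * (9 * Hsn * H0 ^ 2)).
    - apply Rmult_le_compat_l; lra.
    - right; field. }
  lra.
Qed.

End MainEstimate.

Lemma PI_ge_304 : 304 / 100 <= PI.
Proof.
  (* Leibniz: PI / 4 >= 1 - 1/3 + ... - 1/19 = 11064338 / 14549535. *)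
  destruct (PI_ineq 4) as [H _]; unfold tg_alt, PI_tg in H; cbn in H.
  rewrite ?S_INR in H; cbn in H.
  match type of H with ?a <= _ => replace a with (11064338 / 14549535) in H by field end.
  lra.
Qed.

Lemma B30_kernel_sq_sum_ub_le n s : 0 < s <= 1 -> (1 <= n)%nat ->
  9 * B30_kernel_sq_sum_ub n <= (PI ^ 2 / Rpower (INR n) s) ^ 2.
Proof.
  intros Hs Hn.
  assert (Hn1 : 1 <= INR n) by (apply (le_INR 1); auto).
  assert (HR : Rpower (INR n) s <= INR n + 1).
  { apply Rle_trans with (Rpower (INR n) 1); [apply Rle_Rpower; lra | rewrite Rpower_1; lra]. }
  pose proof (exp_pos (s * ln (INR n))) as HRpos; fold (Rpower (INR n) s) in HRpos.
  assert (HPI : 45 / 4 * sum_inv_sq_ub * sum_inv_4th_ub <= PI ^ 4).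
  { pose proof PI_ge_304. assert ((304 / 100) ^ 4 <= PI ^ 4) by (apply pow_incr; lra).
    unfold sum_inv_sq_ub, sum_inv_4th_ub; lra. }
  unfold B30_kernel_sq_sum_ub; set (N := INR n + 1) in *; set (Rp := Rpower (INR n) s) in *.
  replace ((PI ^ 2 / Rp) ^ 2) with (PI ^ 4 / Rp ^ 2) by (field; lra).
  replace (9 * (5 * sum_inv_sq_ub * sum_inv_4th_ub / (4 * N ^ 2)))
    with ((45 / 4 * sum_inv_sq_ub * sum_inv_4th_ub) / N ^ 2) by (field; lra).
  apply Rle_trans with (PI ^ 4 / N ^ 2); unfold Rdiv.
  - apply Rmult_le_compat_r; [apply Rinv_ge0, pow2_ge_0 | exact HPI].
  - apply Rmult_le_compat_l; [apply pow_le; pose proof PI_RGT_0; lra|].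
    apply Rinv_le_contravar; [apply pow_lt; lra | apply pow_incr; lra].
Qed.

Theorem lemma7p9 (s : R) (n : nat) (t : R) (v : seqC) :
  0 < s -> s <= 1 -> (1 <= n)%nat -> in_Hdot s v ->
  in_Hdot s (B30 n t v v v) /\
  hnorm s (B30 n t v v v) <= PI ^ 2 / Rpower (INR n) s * (hnorm 0 v) ^ 2 * hnorm s v.
Proof.
  intros Hs0 Hs1 Hn Hv; assert (Hs : 0 < s <= 1) by lra.
  destruct (in_Hdot_of_sum_bounded s (B30 n t v v v) _ (sum_bounded_wcoef_B30_sq s n t v Hs Hv))
    as [HB HBle].
  split; [exact HB|].
  set (c := PI ^ 2 / Rpower (INR n) s).
  set (H0 := real (hsnorm2 0 v)) in *; set (Hsn := real (hsnorm2 s v)) in *.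
  assert (HH0 : 0 <= H0) by apply (sum_bounded_ge0 _ _ (sum_bounded_wcoef0_sq s v Hs Hv)).
  assert (HHs : 0 <= Hsn) by apply (sum_bounded_ge0 _ _ (sum_bounded_wcoefs_sq s v Hv)).
  assert (Hc : 0 <= c) by (apply Rlt_le, Rdiv_lt_0_compat; [apply pow_lt, PI_RGT_0 | apply exp_pos]).
  unfold hnorm; fold H0 Hsn; rewrite pow2_sqrt by exact HH0.
  rewrite <- (sqrt_pow2 (c * H0 * sqrt Hsn))
    by (apply Rmult_le_pos; [apply Rmult_le_pos | apply sqrt_pos]; auto).
  apply sqrt_le_1_alt; eapply Rle_trans; [exact HBle|].
  rewrite !Rpow_mult_distr, pow2_sqrt by exact HHs.
  pose proof (B30_kernel_sq_sum_ub_le n s Hs Hn) as Hconst; fold c in Hconst.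
  assert (0 <= Hsn * H0 ^ 2) by (apply Rmult_le_pos; [|apply pow2_ge_0]; auto).
  nra.
Qed.
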